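(* $\chi=\mathbb E[|X(-J,-1)|]$ satisfies $1\le\chi\le2$. Moreover, $\chi=2$ if and only if $\lim_{n\to\infty}\mathbb E[\mathcal C(-n,-1)\mathbbm 1_{J>n}]=0$.
   Context: Fix an integer $k\ge 2$ and $p\in[0,1]$. Let $\Theta=\{b_1,\dots,b_k,o_1,\dots,o_k,F\}$, where $b_i$ is a burger of type $i$, $o_i$ is an order of type $i$, and $F$ is a flexible order. Words in $\Theta$ are considered modulo the relations $b_io_i=b_iF=\varnothing$ and $b_io_j=o_jb_i$ for $i\ne j$; $\overline W$ denotes the reduced form of $W$ and $|W|$ its length. In the reduction, each $o_i$ consumes the most recent not-yet-consumed $b_i$ to its left, each $F$ consumes the most recent not-yet-consumed burger of any type to its left, and the reduced word lists the unconsumed orders followed by the unconsumed burgers. Let $(X(n))_{n\in\mathbb Z}$ be i.i.d. with $\mathbb P(X(n)=b_i)=\frac1{2k}$, $\mathbb P(X(n)=o_i)=\frac{1-p}{2k}$ and $\mathbb P(X(n)=F)=\frac p2$. For $m\le n$, set $X(m,n)=\overline{X(m)\cdots X(n)}$. For a word $W$, $\mathcal C(W)$ is the number of burgers minus the number of orders in $W$, and $\mathcal C(m,n)=\mathcal C(X(m,n))$. Let $J$ be the smallest positive integer such that $X(-J,-1)$ contains exactly one burger. *)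

From Stdlib Require Import Reals List Arith Bool.
Import ListNotations.
Open Scope R_scope.

(** Symbols of Theta: burger b_i, order o_i (types i < k), flexible order F. *)
Inductive sym : Type := Bur (i : nat) | Ord (i : nat) | Flex.

Definition alph (k : nat) : list sym :=
  map Bur (seq 0 k) ++ map Ord (seq 0 k) ++ [Flex].

Fixpoint words (k n : nat) : list (list sym) :=
  match n with
  | O => [[]]
  | S m => flat_map (fun x => map (cons x) (words k m)) (alph k)
  end.

(** Remove the most recent burger of type i from the stack
    (stack = list of burger types, most recent first). *)
Fixpoint take_bur (i : nat) (st : list nat) : option (list nat) :=
  match st with
  | [] => None
  | j :: st' => if Nat.eqb i j then Some st'
               else match take_bur i st' with
                    | Some s => Some (j :: s)
                    | None => None
                    end
  end.

(** One reduction step: state = (unconsumed orders in order, burger stack). *)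
Definition step (s : list sym * list nat) (x : sym) : list sym * list nat :=
  let (ords, st) := s in
  match x with
  | Bur i => (ords, i :: st)
  | Ord i => match take_bur i st with
             | Some st' => (ords, st')
             | None => (ords ++ [Ord i], st)
             end
  | Flex => match st with
            | _ :: st' => (ords, st')
            | [] => (ords ++ [Flex], st)
            end
  end.

Definition reduce (w : list sym) : list sym :=
  let (ords, st) := fold_left step w ([], []) in ords ++ map Bur (rev st).

Definition is_bur (x : sym) : bool := match x with Bur _ => true | _ => false end.

Definition nburgers (w : list sym) : nat := length (filter is_bur w).
Definition norders (w : list sym) : nat := length (filter (fun x => negb (is_bur x)) w).

Definition Cw (w : list sym) : R := INR (nburgers w) - INR (norders w).

Definition prob (k : nat) (p : R) (x : sym) : R :=
  match x with
  | Bur _ => 1 / (2 * INR k)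
  | Ord _ => (1 - p) / (2 * INR k)
  | Flex => p / 2
  end.

Definition wprob (k : nat) (p : R) (w : list sym) : R :=
  fold_right (fun x r => prob k p x * r) 1 w.

Definition sumR (l : list R) : R := fold_right Rplus 0 l.

(** The word w = [X(-n); ...; X(-1)]; its suffix of length i is
    [X(-i); ...; X(-1)], whose reduction is X(-i,-1). *)
Definition suffix (i : nat) (w : list sym) : list sym := skipn (length w - i) w.

Definition one_burger (w : list sym) : bool := Nat.eqb (nburgers (reduce w)) 1.

Definition J_eq (j : nat) (w : list sym) : bool :=
  one_burger w && forallb (fun i => negb (one_burger (suffix i w))) (seq 1 (j - 1)).

Definition J_gt (n : nat) (w : list sym) : bool :=
  forallb (fun i => negb (one_burger (suffix i w))) (seq 1 n).

Definition chi_term (k : nat) (p : R) (j : nat) : R :=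
  sumR (map (fun w => if J_eq j w then wprob k p w * INR (length (reduce w)) else 0)
            (words k j)).

Definition E_C_Jgt (k : nat) (p : R) (n : nat) : R :=
  sumR (map (fun w => if J_gt n w then wprob k p w * Cw (reduce w) else 0)
            (words k n)).

From Stdlib Require Import Reals Lra Lia List Bool.
Import ListNotations.
Open Scope R_scope.

(* On {J > n} no suffix X(-i,-1), i <= n, contains a burger, because prepending a letter
   adds at most one burger to the reduced word; hence C(-i,-1) <= 0 for all i <= n, and
   P(J > n) is at most the probability that a simple random walk stays nonpositive for
   n steps, which tends to 0.  When X(-J,-1) has exactly one burger,
   |X(-J,-1)| = 2 - C(-J,-1).  The letter X(-n-1) has a centred charge independent of
   X(-n,-1), so
     sum_(j <= N) E[|X(-j,-1)| 1_{J = j}] = 2 P(J <= N) + E[C(-N,-1) 1_{J > N}],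
   where the last term is nonpositive and the left side is at least P(J <= N).  Letting
   N -> oo gives 1 <= chi <= 2 and chi - 2 = lim E[C(-N,-1) 1_{J > N}]. *)

(** * Expectations over words *)

Lemma sumR_app (l1 l2 : list R) : sumR (l1 ++ l2) = sumR l1 + sumR l2.
Proof. induction l1; simpl; [lra | rewrite IHl1; lra]. Qed.

Lemma sumR_map_add {A} (f g : A -> R) (l : list A) :
  sumR (map (fun x => f x + g x) l) = sumR (map f l) + sumR (map g l).
Proof. induction l; simpl; [lra | rewrite IHl; lra]. Qed.

Lemma sumR_map_scal {A} (c : R) (f : A -> R) (l : list A) :
  sumR (map (fun x => c * f x) l) = c * sumR (map f l).
Proof. induction l; simpl; [lra | rewrite IHl; lra]. Qed.

Lemma sumR_map_ext_in {A} (f g : A -> R) (l : list A) :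
  (forall x, In x l -> f x = g x) -> sumR (map f l) = sumR (map g l).
Proof. induction l; simpl; intros H; [lra |]. rewrite H, IHl; auto. Qed.

Lemma sumR_map_le {A} (f g : A -> R) (l : list A) :
  (forall x, In x l -> f x <= g x) -> sumR (map f l) <= sumR (map g l).
Proof. induction l; simpl; intros H; [lra |]. apply Rplus_le_compat; auto. Qed.

Lemma sumR_map_const {A} (c : R) (l : list A) :
  sumR (map (fun _ => c) l) = INR (length l) * c.
Proof. induction l; simpl map; simpl length; [simpl; lra |]. rewrite S_INR. simpl. lra. Qed.

Lemma sumR_map_flat_map {A B} (g : B -> R) (h : A -> list B) (l : list A) :
  sumR (map g (flat_map h l)) = sumR (map (fun x => sumR (map g (h x))) l).
Proof. induction l; simpl; auto. rewrite map_app, sumR_app, IHl. auto. Qed.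

Lemma sumR_map_swap {A B} (f : A -> B -> R) (la : list A) (lb : list B) :
  sumR (map (fun a => sumR (map (fun b => f a b) lb)) la) =
  sumR (map (fun b => sumR (map (fun a => f a b) la)) lb).
Proof.
  induction la; simpl.
  - rewrite (sumR_map_const 0). lra.
  - rewrite IHla, <- sumR_map_add. auto.
Qed.

Lemma words_length (k n : nat) (w : list sym) : In w (words k n) -> length w = n.
Proof.
  revert w; induction n; simpl; intros w H.
  - destruct H as [<- | []]; auto.
  - apply in_flat_map in H as [x [_ H]]. apply in_map_iff in H as [w' [<- H]].
    simpl. f_equal. auto.
Qed.

Definition charge (x : sym) : R := if is_bur x then 1 else -1.

Lemma Cw_nil : Cw [] = 0.
Proof. unfold Cw; simpl. ring. Qed.

Lemma Cw_cons (x : sym) (w : list sym) : Cw (x :: w) = charge x + Cw w.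
Proof.
  unfold Cw, nburgers, norders, charge.
  destruct x; cbn [filter length is_bur negb]; rewrite ?S_INR; ring.
Qed.

Lemma Cw_app (w1 w2 : list sym) : Cw (w1 ++ w2) = Cw w1 + Cw w2.
Proof. induction w1; simpl; [rewrite Cw_nil; ring |]. rewrite !Cw_cons, IHw1. ring. Qed.

Section Expectation.

Variables (k : nat) (p : R).
Hypothesis Hk : (2 <= k)%nat.
Hypothesis Hp : 0 <= p <= 1.

Definition expect (n : nat) (f : list sym -> R) : R :=
  sumR (map (fun w => wprob k p w * f w) (words k n)).

Lemma expect_nil (f : list sym -> R) : expect 0 f = f [].
Proof. unfold expect; simpl. ring. Qed.

Lemma expect_ext (n : nat) (f g : list sym -> R) :
  (forall w, length w = n -> f w = g w) -> expect n f = expect n g.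
Proof.
  intros H. apply sumR_map_ext_in. intros w Hw.
  rewrite H; auto. apply words_length with k; auto.
Qed.

Lemma expect_add (n : nat) (f g : list sym -> R) :
  expect n (fun w => f w + g w) = expect n f + expect n g.
Proof. unfold expect. rewrite <- sumR_map_add. apply sumR_map_ext_in; intros; ring. Qed.

Lemma expect_scal (n : nat) (c : R) (f : list sym -> R) :
  expect n (fun w => c * f w) = c * expect n f.
Proof. unfold expect. rewrite <- sumR_map_scal. apply sumR_map_ext_in; intros; ring. Qed.

Lemma expect_cons (n : nat) (f : list sym -> R) :
  expect (S n) f =
  sumR (map (fun x => prob k p x * expect n (fun w => f (x :: w))) (alph k)).
Proof.
  unfold expect. simpl words. rewrite sumR_map_flat_map. apply sumR_map_ext_in; intros x _.
  rewrite map_map, <- sumR_map_scal. apply sumR_map_ext_in; intros w _. simpl. ring.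
Qed.

Lemma expect_snoc (n : nat) (f : list sym -> R) :
  expect (S n) f =
  sumR (map (fun x => prob k p x * expect n (fun w => f (w ++ [x]))) (alph k)).
Proof.
  revert f; induction n; intros f; rewrite expect_cons.
  - apply sumR_map_ext_in; intros x _. rewrite !expect_nil. auto.
  - transitivity (sumR (map (fun y => sumR (map (fun x => prob k p x *
      (prob k p y * expect n (fun w => f ((y :: w) ++ [x])))) (alph k))) (alph k))).
    + apply sumR_map_ext_in; intros y _. rewrite IHn, <- sumR_map_scal.
      apply sumR_map_ext_in; intros x _. simpl. ring.
    + rewrite sumR_map_swap. apply sumR_map_ext_in; intros x _.
      rewrite sumR_map_scal, expect_cons. auto.
Qed.

Lemma sumR_alph_by_kind (F : sym -> R) (a b : R) :
  (forall x, F x = if is_bur x then a else b) ->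
  sumR (map (fun x => prob k p x * F x) (alph k)) = (a + b) / 2.
Proof.
  intros HF. assert (0 < INR k) by (apply lt_0_INR; lia).
  unfold alph. rewrite !map_app, !map_map, !sumR_app.
  rewrite (sumR_map_ext_in (fun i => prob k p (Bur i) * F (Bur i)) (fun _ => 1 / (2 * INR k) * a))
    by (intros; rewrite HF; auto).
  rewrite (sumR_map_ext_in (fun i => prob k p (Ord i) * F (Ord i)) (fun _ => (1 - p) / (2 * INR k) * b))
    by (intros; rewrite HF; auto).
  rewrite !sumR_map_const, length_seq. simpl. rewrite HF. simpl. field. lra.
Qed.

Lemma expect_const (n : nat) (c : R) : expect n (fun _ => c) = c.
Proof.
  induction n; [apply expect_nil |].
  rewrite expect_cons, (sumR_alph_by_kind _ c c); [lra |].
  intros x. rewrite IHn. destruct (is_bur x); auto.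
Qed.

Lemma wprob_nonneg (w : list sym) : 0 <= wprob k p w.
Proof.
  assert (0 < INR k) by (apply lt_0_INR; lia).
  induction w as [| x w IH]; simpl; [lra |].
  apply Rmult_le_pos; auto.
  destruct x; simpl; [| | lra]; apply Rmult_le_pos; try lra;
    left; apply Rinv_0_lt_compat; lra.
Qed.

Lemma expect_le (n : nat) (f g : list sym -> R) :
  (forall w, length w = n -> f w <= g w) -> expect n f <= expect n g.
Proof.
  intros H. apply sumR_map_le. intros w Hw.
  apply Rmult_le_compat_l; [apply wprob_nonneg |]. apply H, words_length with k; auto.
Qed.

Lemma expect_nonneg (n : nat) (f : list sym -> R) :
  (forall w, length w = n -> 0 <= f w) -> 0 <= expect n f.
Proof. intros H. rewrite <- (expect_const n 0). apply expect_le. auto. Qed.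

End Expectation.

(** * Reduction of words *)

Definition stack_step (st : list nat) (x : sym) : list nat :=
  match x with
  | Bur i => i :: st
  | Ord i => match take_bur i st with Some st' => st' | None => st end
  | Flex => tl st
  end.

Definition burger_stack (w : list sym) : list nat := fold_left stack_step w [].

Definition pending_orders (w : list sym) : list sym := fst (fold_left step w ([], [])).

Lemma snd_fold_step (w : list sym) (s : list sym * list nat) :
  snd (fold_left step w s) = fold_left stack_step w (snd s).
Proof.
  revert s; induction w as [| x w IH]; intros [o st]; simpl; auto.
  rewrite IH. f_equal. destruct x; simpl; auto.
  - destruct (take_bur i st); auto.
  - destruct st; auto.
Qed.

Lemma burger_stack_fold (w : list sym) : burger_stack w = snd (fold_left step w ([], [])).
Proof. rewrite snd_fold_step. auto. Qed.

Lemma fst_fold_step_no_burger (w : list sym) (s : list sym * list nat) :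
  Forall (fun x => is_bur x = false) (fst s) ->
  Forall (fun x => is_bur x = false) (fst (fold_left step w s)).
Proof.
  revert s; induction w as [| x w IH]; intros [o st] H; simpl; auto.
  apply IH. destruct x; simpl; [auto | destruct (take_bur i st) | destruct st];
    simpl; auto; apply Forall_app; auto.
Qed.

Lemma take_bur_length (i : nat) (st st' : list nat) :
  take_bur i st = Some st' -> length st = S (length st').
Proof.
  revert st'; induction st as [| j st IH]; simpl; intros st' H; [discriminate |].
  destruct (Nat.eqb i j); [injection H as <-; auto |].
  destruct (take_bur i st) eqn:E; inversion H; subst. simpl. auto.
Qed.

Definition state_charge (s : list sym * list nat) : R :=
  INR (length (snd s)) - INR (length (fst s)).

Lemma state_charge_step (s : list sym * list nat) (x : sym) :
  state_charge (step s x) = state_charge s + charge x.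
Proof.
  destruct s as [o st]; unfold state_charge, charge; destruct x; cbn [step fst snd is_bur].
  - cbn [length]. rewrite S_INR. ring.
  - destruct (take_bur i st) eqn:E; cbn [fst snd].
    + rewrite (take_bur_length _ _ _ E), S_INR. ring.
    + rewrite length_app, plus_INR. simpl. ring.
  - destruct st; cbn [fst snd length]; rewrite ?length_app, ?plus_INR, ?S_INR; simpl; ring.
Qed.

Lemma state_charge_fold (w : list sym) (s : list sym * list nat) :
  state_charge (fold_left step w s) = state_charge s + Cw w.
Proof.
  revert s; induction w as [| x w IH]; intros s; simpl; [rewrite Cw_nil; ring |].
  rewrite IH, state_charge_step, Cw_cons. ring.
Qed.

Lemma nburgers_app (w1 w2 : list sym) : nburgers (w1 ++ w2) = (nburgers w1 + nburgers w2)%nat.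
Proof. unfold nburgers. rewrite filter_app, length_app. auto. Qed.

Lemma norders_app (w1 w2 : list sym) : norders (w1 ++ w2) = (norders w1 + norders w2)%nat.
Proof. unfold norders. rewrite filter_app, length_app. auto. Qed.

Lemma length_nburgers_norders (w : list sym) : length w = (nburgers w + norders w)%nat.
Proof.
  unfold nburgers, norders. induction w as [| x w IH]; auto.
  destruct x; simpl; lia.
Qed.

Lemma reduce_counts (w : list sym) :
  nburgers (reduce w) = length (burger_stack w) /\
  norders (reduce w) = length (pending_orders w).
Proof.
  rewrite burger_stack_fold. unfold reduce, pending_orders.
  pose proof (fst_fold_step_no_burger w ([], []) (Forall_nil _)) as Ho.
  destruct (fold_left step w ([], [])) as [o st]; cbn [fst snd] in *.
  rewrite nburgers_app, norders_app.
  assert (Hb : forall l, nburgers (map Bur l) = length l /\ norders (map Bur l) = 0%nat)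
    by (unfold nburgers, norders; induction l as [| i l [IH1 IH2]]; simpl;
        rewrite ?IH1, ?IH2; auto).
  assert (Hob : nburgers o = 0%nat /\ norders o = length o).
  { induction Ho as [| x o Hx _ [IH1 IH2]]; auto.
    unfold nburgers, norders in *; simpl; rewrite Hx; simpl; auto. }
  destruct (Hb (rev st)) as [-> ->]. rewrite length_rev. lia.
Qed.

Lemma Cw_reduce (w : list sym) : Cw (reduce w) = Cw w.
Proof.
  destruct (reduce_counts w) as [Hb Ho].
  replace (Cw w) with (state_charge (fold_left step w ([], [])))
    by (rewrite state_charge_fold; unfold state_charge; simpl; ring).
  unfold Cw, state_charge. rewrite Hb, Ho, burger_stack_fold. reflexivity.
Qed.

Lemma length_reduce_one_burger (w : list sym) :
  one_burger w = true -> INR (length (reduce w)) = 2 - Cw w /\ 1 <= INR (length (reduce w)).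
Proof.
  unfold one_burger. intros H. apply Nat.eqb_eq in H.
  rewrite <- Cw_reduce, length_nburgers_norders, H. unfold Cw.
  rewrite H, plus_INR. simpl. pose proof (pos_INR (norders (reduce w))). lra.
Qed.

Definition inserted (A B : list nat) : Prop :=
  B = A \/ exists A1 A2 e, A = A1 ++ A2 /\ B = A1 ++ e :: A2.

Lemma take_bur_app (i : nat) (l1 l2 : list nat) :
  take_bur i (l1 ++ l2) =
  match take_bur i l1 with
  | Some s => Some (s ++ l2)
  | None => match take_bur i l2 with Some s => Some (l1 ++ s) | None => None end
  end.
Proof.
  induction l1 as [| j l1 IH]; simpl; [destruct (take_bur i l2); auto |].
  destruct (Nat.eqb i j); auto. rewrite IH.
  destruct (take_bur i l1); auto. destruct (take_bur i l2); auto.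
Qed.

Lemma take_bur_split (i : nat) (l s : list nat) :
  take_bur i l = Some s -> exists l1 l2, l = l1 ++ i :: l2 /\ s = l1 ++ l2.
Proof.
  revert s; induction l as [| j l IH]; simpl; intros s H; [discriminate |].
  destruct (Nat.eqb i j) eqn:E.
  - apply Nat.eqb_eq in E; subst. injection H as <-. exists [], l; auto.
  - destruct (take_bur i l) as [s' |]; [| discriminate]. injection H as <-.
    destruct (IH s' eq_refl) as [l1 [l2 [-> ->]]]. exists (j :: l1), l2; auto.
Qed.

(* The extra burger e is either still present, or some order ate it instead of
   another burger (which then plays the role of e), or instead of going unserved. *)
Lemma stack_step_inserted (A B : list nat) (x : sym) :
  inserted A B -> inserted (stack_step A x) (stack_step B x).
Proof.
  intros [-> | [A1 [A2 [e [-> ->]]]]]; [left; auto |].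
  destruct x as [i | i |]; simpl.
  - right. exists (i :: A1), A2, e. auto.
  - rewrite !take_bur_app. simpl.
    destruct (take_bur i A1) as [s |]; [right; exists s, A2, e; auto |].
    destruct (Nat.eqb i e) eqn:He; destruct (take_bur i A2) as [s |] eqn:H2.
    + apply take_bur_split in H2 as [l1 [l2 [-> ->]]].
      right. exists (A1 ++ l1), l2, i. rewrite <- !app_assoc. auto.
    + left; auto.
    + right; exists A1, s, e; auto.
    + right; exists A1, A2, e; auto.
  - destruct A1 as [| y A1]; simpl.
    + destruct A2 as [| y A2]; [left; auto |]. right; exists [], A2, y; auto.
    + right; exists A1, A2, e; auto.
Qed.

Lemma fold_stack_step_inserted (w : list sym) (A B : list nat) :
  inserted A B ->
  (length (fold_left stack_step w B) <= S (length (fold_left stack_step w A)))%nat.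
Proof.
  revert A B; induction w as [| x w IH]; simpl; intros A B H.
  - destruct H as [-> | [A1 [A2 [e [-> ->]]]]]; rewrite ?length_app; simpl; lia.
  - apply IH, stack_step_inserted; auto.
Qed.

Lemma nburgers_reduce_cons (x : sym) (w : list sym) :
  (nburgers (reduce (x :: w)) <= S (nburgers (reduce w)))%nat.
Proof.
  rewrite (proj1 (reduce_counts (x :: w))), (proj1 (reduce_counts w)).
  unfold burger_stack. simpl. apply fold_stack_step_inserted.
  destruct x as [i | i |]; [right; exists [], [], i | left | left]; auto.
Qed.

(** * The time J *)

Lemma suffix_0 (w : list sym) : suffix 0 w = [].
Proof. unfold suffix. rewrite Nat.sub_0_r. apply skipn_all. Qed.

Lemma suffix_length (w : list sym) : suffix (length w) w = w.
Proof. unfold suffix. rewrite Nat.sub_diag. auto. Qed.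

Lemma suffix_cons (i : nat) (x : sym) (w : list sym) :
  (i <= length w)%nat -> suffix i (x :: w) = suffix i w.
Proof.
  intros H. unfold suffix. simpl length.
  replace (S (length w) - i)%nat with (S (length w - i)) by lia. auto.
Qed.

Lemma suffix_S (i : nat) (w : list sym) :
  (S i <= length w)%nat -> exists x, suffix (S i) w = x :: suffix i w.
Proof.
  induction w as [| y w IH]; simpl length; intros H; [lia |].
  destruct (Nat.eq_dec i (length w)) as [-> | Hne].
  - exists y. rewrite (suffix_cons (length w) y w), (suffix_length w) by lia. apply (suffix_length (y :: w)).
  - destruct (IH ltac:(lia)) as [x Hx]. exists x. rewrite !suffix_cons by lia. auto.
Qed.

Lemma suffix_snoc (i : nat) (w : list sym) (x : sym) :
  (i <= length w)%nat -> suffix (S i) (w ++ [x]) = suffix i w ++ [x].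
Proof.
  intros H. unfold suffix. rewrite length_app. simpl.
  replace (length w + 1 - S i)%nat with (length w - i)%nat by lia.
  rewrite skipn_app. replace (length w - i - length w)%nat with 0%nat by lia. auto.
Qed.

Lemma forallb_seq_ext (f g : nat -> bool) (a n : nat) :
  (forall i, (a <= i < a + n)%nat -> f i = g i) ->
  forallb f (seq a n) = forallb g (seq a n).
Proof.
  revert a; induction n as [| n IH]; simpl; intros a H; auto.
  rewrite H, IH; auto; [intros i Hi; apply H |]; lia.
Qed.

Lemma forallb_seq_S (f : nat -> bool) (a n : nat) :
  forallb f (seq (S a) n) = forallb (fun i => f (S i)) (seq a n).
Proof. revert a; induction n as [| n IH]; simpl; intros a; auto. rewrite IH. auto. Qed.

Lemma J_gt_cons (n : nat) (x : sym) (w : list sym) : length w = n ->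
  J_gt (S n) (x :: w) = J_gt n w && negb (one_burger (x :: w)).
Proof.
  intros <-. unfold J_gt. rewrite seq_S, forallb_app. simpl forallb at 2.
  rewrite (suffix_length (x :: w) : suffix (S (length w)) (x :: w) = x :: w), andb_true_r.
  f_equal.
  apply forallb_seq_ext. intros i Hi. rewrite suffix_cons by lia. auto.
Qed.

Lemma J_eq_cons (n : nat) (x : sym) (w : list sym) : length w = n ->
  J_eq (S n) (x :: w) = one_burger (x :: w) && J_gt n w.
Proof.
  intros <-. unfold J_eq, J_gt. simpl (S _ - 1)%nat. rewrite Nat.sub_0_r. f_equal.
  apply forallb_seq_ext. intros i Hi. rewrite suffix_cons by lia. auto.
Qed.

Lemma J_gt_suffix_no_burger (n : nat) (w : list sym) : J_gt n w = true ->
  forall i, (i <= n)%nat -> (i <= length w)%nat -> nburgers (reduce (suffix i w)) = 0%nat.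
Proof.
  unfold J_gt. rewrite forallb_forall. intros HJ i.
  induction i as [| i IH]; intros Hn Hw; [rewrite suffix_0; auto |].
  destruct (suffix_S i w Hw) as [x Hx].
  pose proof (nburgers_reduce_cons x (suffix i w)) as Hc. rewrite <- Hx, IH in Hc by lia.
  specialize (HJ (S i) ltac:(apply in_seq; lia)).
  unfold one_burger in HJ. apply negb_true_iff, Nat.eqb_neq in HJ. lia.
Qed.

Lemma J_gt_Cw_suffix_nonpos (n : nat) (w : list sym) : length w = n -> J_gt n w = true ->
  forall i, (i <= n)%nat -> Cw (suffix i w) <= 0.
Proof.
  intros Hl HJ i Hi. rewrite <- Cw_reduce. unfold Cw.
  rewrite (J_gt_suffix_no_burger n w HJ i Hi ltac:(lia)).
  pose proof (pos_INR (norders (reduce (suffix i w)))). simpl. lra.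
Qed.

Section Hitting_time.

Variables (k : nat) (p : R).
Hypothesis Hk : (2 <= k)%nat.
Hypothesis Hp : 0 <= p <= 1.

Definition P_J_gt (n : nat) : R := expect k p n (fun w => if J_gt n w then 1 else 0).
Definition P_J_eq (n : nat) : R := expect k p n (fun w => if J_eq n w then 1 else 0).
Definition E_C_Jeq (n : nat) : R := expect k p n (fun w => if J_eq n w then Cw w else 0).

Lemma E_C_Jgt_expect (n : nat) :
  E_C_Jgt k p n = expect k p n (fun w => if J_gt n w then Cw w else 0).
Proof.
  unfold E_C_Jgt, expect. apply sumR_map_ext_in. intros w _.
  destruct (J_gt n w); [rewrite Cw_reduce |]; ring.
Qed.

Lemma chi_term_decomp (n : nat) : chi_term k p n = 2 * P_J_eq n - E_C_Jeq n.
Proof.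
  transitivity (expect k p n (fun w =>
    2 * (if J_eq n w then 1 else 0) + -1 * (if J_eq n w then Cw w else 0))).
  - unfold chi_term, expect. apply sumR_map_ext_in. intros w _.
    destruct (J_eq n w) eqn:HJ; [| ring].
    apply andb_prop in HJ as [Hone _].
    rewrite (proj1 (length_reduce_one_burger w Hone)). ring.
  - rewrite expect_add, !expect_scal. unfold P_J_eq, E_C_Jeq. ring.
Qed.

Lemma P_J_eq_le_chi_term (n : nat) : P_J_eq n <= chi_term k p n.
Proof.
  replace (chi_term k p n)
    with (expect k p n (fun w => if J_eq n w then INR (length (reduce w)) else 0))
    by (unfold chi_term, expect; apply sumR_map_ext_in; intros w _; destruct (J_eq n w); ring).
  apply expect_le; auto. intros w _. destruct (J_eq n w) eqn:HJ; [| lra].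
  apply andb_prop in HJ as [Hone _]. apply (length_reduce_one_burger w Hone).
Qed.

Lemma P_J_eq_nonneg (n : nat) : 0 <= P_J_eq n.
Proof. apply expect_nonneg; auto. intros w _. destruct (J_eq n w); lra. Qed.

Lemma P_J_gt_nonneg (n : nat) : 0 <= P_J_gt n.
Proof. apply expect_nonneg; auto. intros w _. destruct (J_gt n w); lra. Qed.

Lemma E_C_Jgt_nonpos (n : nat) : E_C_Jgt k p n <= 0.
Proof.
  rewrite E_C_Jgt_expect, <- (expect_const k p Hk n 0) at 1.
  apply expect_le; auto. intros w Hw. destruct (J_gt n w) eqn:HJ; [| lra].
  rewrite <- (suffix_length w), Hw. apply (J_gt_Cw_suffix_nonpos n); auto.
Qed.

Lemma expect_J_split (n : nat) (f : list sym -> R) :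
  expect k p (S n) (fun w => if J_gt (S n) w then f w else 0) +
  expect k p (S n) (fun w => if J_eq (S n) w then f w else 0) =
  sumR (map (fun x => prob k p x * expect k p n (fun w => if J_gt n w then f (x :: w) else 0))
            (alph k)).
Proof.
  rewrite <- expect_add, expect_cons. apply sumR_map_ext_in. intros x _. f_equal.
  apply expect_ext. intros w Hw. rewrite J_gt_cons, J_eq_cons by auto.
  destruct (J_gt n w), (one_burger (x :: w)); simpl; ring.
Qed.

Lemma P_J_gt_S (n : nat) : P_J_gt (S n) + P_J_eq (S n) = P_J_gt n.
Proof.
  unfold P_J_gt, P_J_eq. rewrite (expect_J_split n (fun _ => 1)).
  rewrite (sumR_alph_by_kind k p Hk _ (P_J_gt n) (P_J_gt n)); [unfold P_J_gt; lra |].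
  intros x. destruct (is_bur x); auto.
Qed.

Lemma expect_J_gt_Cw_cons (n : nat) (x : sym) :
  expect k p n (fun w => if J_gt n w then Cw (x :: w) else 0) =
  charge x * P_J_gt n + E_C_Jgt k p n.
Proof.
  rewrite E_C_Jgt_expect. unfold P_J_gt. rewrite <- expect_scal, <- expect_add.
  apply expect_ext. intros w _. rewrite Cw_cons. destruct (J_gt n w); ring.
Qed.

Lemma E_C_Jgt_S (n : nat) : E_C_Jgt k p (S n) + E_C_Jeq (S n) = E_C_Jgt k p n.
Proof.
  rewrite (E_C_Jgt_expect (S n)). unfold E_C_Jeq. rewrite expect_J_split.
  rewrite (sumR_alph_by_kind k p Hk _ (P_J_gt n + E_C_Jgt k p n) (- P_J_gt n + E_C_Jgt k p n));
    [lra |].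
  intros x. cbv beta. rewrite expect_J_gt_Cw_cons. unfold charge. destruct (is_bur x); ring.
Qed.

Lemma sum_P_J_eq (N : nat) : sum_f_R0 P_J_eq N = 1 - P_J_gt N.
Proof.
  induction N as [| N IH]; simpl.
  - unfold P_J_eq, P_J_gt. rewrite !expect_nil. simpl. ring.
  - rewrite IH. pose proof (P_J_gt_S N). lra.
Qed.

Lemma sum_chi_term (N : nat) :
  sum_f_R0 (chi_term k p) N = 2 * (1 - P_J_gt N) + E_C_Jgt k p N.
Proof.
  induction N as [| N IH]; simpl.
  - rewrite chi_term_decomp, E_C_Jgt_expect. unfold P_J_eq, E_C_Jeq, P_J_gt.
    rewrite !expect_nil. simpl. rewrite Cw_nil. ring.
  - rewrite IH, chi_term_decomp. pose proof (P_J_gt_S N). pose proof (E_C_Jgt_S N). lra.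
Qed.

End Hitting_time.

(** * Real sequences *)

Lemma Un_cv_const (c : R) : Un_cv (fun _ => c) c.
Proof. intros eps He. exists 0%nat. intros. unfold R_dist. rewrite Rminus_diag, Rabs_R0. lra. Qed.

Lemma Un_cv_midpoint_unique (u a b : nat -> R) (lu la lb : R) :
  (forall n, u (S n) = (a n + b n) / 2) ->
  Un_cv u lu -> Un_cv a la -> Un_cv b lb -> lu = (la + lb) / 2.
Proof.
  intros Hu Hcu Hca Hcb. apply (UL_sequence (fun n => u (S n))).
  - intros eps He. destruct (Hcu eps He) as [N HN]. exists N. intros n Hn. apply HN. lia.
  - apply (Un_cv_ext (fun n => (a n + b n) * / 2)); [intros n; rewrite Hu; auto |].
    apply CV_mult; [apply CV_plus; auto | apply Un_cv_const].
Qed.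

Lemma bounded_harmonic_nat (l : nat -> R) (B : R) :
  l 0%nat = 0 -> 0 <= l 1%nat -> (forall m, l m <= B) ->
  (forall m, l (S m) = (l m + l (S (S m))) / 2) -> l 1%nat = 0.
Proof.
  intros H0 H1 HB Hh.
  assert (Hlin : forall m, l m = INR m * l 1%nat /\ l (S m) = INR (S m) * l 1%nat).
  { induction m as [| m [IH1 IH2]]; [simpl; split; lra |].
    split; auto. pose proof (Hh m). rewrite !S_INR in *. lra. }
  destruct H1 as [Hpos |]; auto.
  destruct (INR_archimed (l 1%nat) B Hpos) as [m Hm].
  specialize (HB m). rewrite (proj1 (Hlin m)) in HB. lra.
Qed.

(** * Comparison with a simple random walk *)

Definition nonposb (x : R) : bool := if Rle_dec x 0 then true else false.

Section Random_walk.

Variables (k : nat) (p : R).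
Hypothesis Hk : (2 <= k)%nat.
Hypothesis Hp : 0 <= p <= 1.

(* Reading X(-1), X(-2), ... the charges form a simple random walk started at h. *)
Definition walk_stays_nonpos (n : nat) (h : R) (w : list sym) : bool :=
  forallb (fun i => nonposb (h + Cw (suffix i w))) (seq 0 (S n)).

Definition P_walk (n : nat) (h : R) : R :=
  expect k p n (fun w => if walk_stays_nonpos n h w then 1 else 0).

Lemma P_walk_0 (h : R) : P_walk 0 h = if nonposb h then 1 else 0.
Proof.
  unfold P_walk. rewrite expect_nil. unfold walk_stays_nonpos. simpl.
  rewrite suffix_0, Cw_nil, Rplus_0_r. destruct (nonposb h); auto.
Qed.

Lemma walk_stays_nonpos_snoc (n : nat) (h : R) (w : list sym) (x : sym) : length w = n ->
  walk_stays_nonpos (S n) h (w ++ [x]) = nonposb h && walk_stays_nonpos n (h + charge x) w.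
Proof.
  intros Hl. unfold walk_stays_nonpos.
  change (seq 0 (S (S n))) with (0%nat :: seq 1 (S n)). cbn [forallb].
  rewrite suffix_0, Cw_nil, Rplus_0_r, forallb_seq_S. f_equal.
  apply forallb_seq_ext. intros i Hi.
  rewrite suffix_snoc, Cw_app, Cw_cons, Cw_nil by lia. f_equal. ring.
Qed.

Lemma P_walk_S (n : nat) (h : R) :
  P_walk (S n) h = if nonposb h then (P_walk n (h + 1) + P_walk n (h - 1)) / 2 else 0.
Proof.
  unfold P_walk at 1. rewrite expect_snoc.
  rewrite (sumR_alph_by_kind k p Hk _ (if nonposb h then P_walk n (h + 1) else 0)
                                      (if nonposb h then P_walk n (h - 1) else 0));
    [destruct (nonposb h); lra |].
  intros x. cbv beta.
  transitivity (if nonposb h then P_walk n (h + charge x) else 0).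
  - unfold P_walk. destruct (nonposb h) eqn:Hh.
    + apply expect_ext. intros w Hw. rewrite walk_stays_nonpos_snoc, Hh by auto. auto.
    + transitivity (expect k p n (fun _ => 0)); [| apply expect_const; auto].
      apply expect_ext. intros w Hw. rewrite walk_stays_nonpos_snoc, Hh by auto. auto.
  - unfold charge, Rminus. destruct (is_bur x); auto.
Qed.


Lemma P_walk_pos (n : nat) (h : R) : 0 < h -> P_walk n h = 0.
Proof.
  intros Hh. assert (Hb : nonposb h = false) by (unfold nonposb; destruct (Rle_dec h 0); auto; lra).
  destruct n; [rewrite P_walk_0 | rewrite P_walk_S]; rewrite Hb; auto.
Qed.

Lemma P_walk_bounds (n : nat) (h : R) : 0 <= P_walk n h <= 1.
Proof.
  split.
  - apply expect_nonneg; auto. intros w _. destruct (walk_stays_nonpos n h w); lra.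
  - rewrite <- (expect_const k p Hk n 1) at 1. apply expect_le; auto.
    intros w _. destruct (walk_stays_nonpos n h w); lra.
Qed.

Lemma P_walk_S_le (n : nat) (h : R) : P_walk (S n) h <= P_walk n h.
Proof.
  revert h; induction n as [| n IH]; intros h; rewrite P_walk_S.
  - rewrite (P_walk_0 h). destruct (nonposb h); [| lra].
    pose proof (P_walk_bounds 0 (h + 1)). pose proof (P_walk_bounds 0 (h - 1)). lra.
  - rewrite (P_walk_S n h). destruct (nonposb h); [| lra].
    pose proof (IH (h + 1)). pose proof (IH (h - 1)). lra.
Qed.

(* The limit l m of P_walk n (1 - m) as n -> oo is harmonic in m, vanishes at m = 0
   and is bounded, hence is identically 0. *)
Lemma P_walk_cv_0 : Un_cv (fun n => P_walk n 0) 0.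
Proof.
  assert (Hlim : forall m, {l | Un_cv (fun n => P_walk n (1 - INR m)) l}).
  { intros m. apply decreasing_cv; [intros n; apply P_walk_S_le |].
    exists 0. intros x [n ->]. unfold opp_seq. pose proof (P_walk_bounds n (1 - INR m)). lra. }
  set (l m := proj1_sig (Hlim m)).
  assert (Hcv : forall m, Un_cv (fun n => P_walk n (1 - INR m)) (l m))
    by (intros m; apply proj2_sig).
  assert (Hl1 : l 1%nat = 0).
  { apply (bounded_harmonic_nat l 1).
    - apply (UL_sequence _ _ _ (Hcv 0%nat)). apply (Un_cv_ext (fun _ => 0)); [| apply Un_cv_const].
      intros n. rewrite P_walk_pos; simpl; lra.
    - apply Rle_cv_lim with (fun _ => 0) (fun n => P_walk n (1 - INR 1));
        [intros n; apply P_walk_bounds | apply Un_cv_const | apply Hcv].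
    - intros m. apply Rle_cv_lim with (fun n => P_walk n (1 - INR m)) (fun _ => 1);
        [intros n; apply P_walk_bounds | apply Hcv | apply Un_cv_const].
    - intros m. apply (Un_cv_midpoint_unique (fun n => P_walk n (1 - INR (S m)))
        (fun n => P_walk n (1 - INR m)) (fun n => P_walk n (1 - INR (S (S m)))));
        [intros n | apply Hcv ..]. rewrite P_walk_S.
      assert (Hnp : nonposb (1 - INR (S m)) = true)
        by (unfold nonposb; destruct (Rle_dec _ 0); auto; rewrite S_INR in *; pose proof (pos_INR m); lra).
      rewrite Hnp, !S_INR.
      replace (1 - (INR m + 1) + 1) with (1 - INR m) by ring.
      replace (1 - (INR m + 1) - 1) with (1 - (INR m + 1 + 1)) by ring. reflexivity. }
  apply (Un_cv_ext (fun n => P_walk n (1 - INR 1))); [intros n; simpl; f_equal; ring |].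
  rewrite <- Hl1. apply Hcv.
Qed.

Lemma P_J_gt_le_P_walk (n : nat) : P_J_gt k p n <= P_walk n 0.
Proof.
  apply expect_le; auto. intros w Hw.
  destruct (J_gt n w) eqn:HJ; [| destruct (walk_stays_nonpos n 0 w); lra].
  replace (walk_stays_nonpos n 0 w) with true; [lra |]. symmetry.
  apply forallb_forall. intros i Hi. apply in_seq in Hi.
  unfold nonposb. destruct (Rle_dec _ 0) as [| Hpos]; auto.
  exfalso. apply Hpos. pose proof (J_gt_Cw_suffix_nonpos n w Hw HJ i ltac:(lia)). lra.
Qed.

Lemma P_J_gt_cv_0 : Un_cv (P_J_gt k p) 0.
Proof.
  intros eps He. destruct (P_walk_cv_0 eps He) as [N HN]. exists N. intros n Hn.
  specialize (HN n Hn). unfold R_dist in *. rewrite Rminus_0_r in *.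
  pose proof (P_J_gt_nonneg k p Hk Hp n). pose proof (P_J_gt_le_P_walk n).
  rewrite Rabs_right in * by lra. lra.
Qed.

End Random_walk.

(** * Partial sums of chi *)

Section Partial_sums.

Variables (k : nat) (p : R).
Hypothesis Hk : (2 <= k)%nat.
Hypothesis Hp : 0 <= p <= 1.

Lemma sum_chi_term_bounds (N : nat) :
  1 - P_J_gt k p N <= sum_f_R0 (chi_term k p) N <= 2.
Proof.
  split.
  - rewrite <- sum_P_J_eq by auto. apply sum_Rle. intros n _. apply P_J_eq_le_chi_term; auto.
  - rewrite sum_chi_term by auto.
    pose proof (P_J_gt_nonneg k p Hk Hp N). pose proof (E_C_Jgt_nonpos k p Hk Hp N). lra.
Qed.

Lemma sum_chi_term_cv : {chi | Un_cv (sum_f_R0 (chi_term k p)) chi}.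
Proof.
  apply growing_cv.
  - intros n. simpl. pose proof (P_J_eq_nonneg k p Hk Hp (S n)).
    pose proof (P_J_eq_le_chi_term k p Hk Hp (S n)). lra.
  - exists 2. intros x [N ->]. apply sum_chi_term_bounds.
Qed.

Lemma one_minus_P_J_gt_cv : Un_cv (fun N => 1 - P_J_gt k p N) 1.
Proof.
  rewrite <- (Rminus_0_r 1) at 1.
  apply CV_minus; auto using Un_cv_const, P_J_gt_cv_0.
Qed.

Lemma E_C_Jgt_cv (chi : R) :
  Un_cv (sum_f_R0 (chi_term k p)) chi -> Un_cv (E_C_Jgt k p) (chi - 2).
Proof.
  intros Hchi.
  apply (Un_cv_ext (fun N => sum_f_R0 (chi_term k p) N - 2 * (1 - P_J_gt k p N)));
    [intros N; rewrite sum_chi_term by auto; ring |].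
  replace (chi - 2) with (chi - 2 * 1) by ring.
  apply CV_minus, CV_mult; auto using Un_cv_const, one_minus_P_J_gt_cv.
Qed.

End Partial_sums.

Theorem mainTheorem4 (k : nat) (p : R) :
  (2 <= k)%nat -> 0 <= p <= 1 ->
  exists chi : R,
    infinite_sum (chi_term k p) chi /\
    1 <= chi <= 2 /\
    (chi = 2 <-> Un_cv (E_C_Jgt k p) 0).
Proof.
  intros Hk Hp.
  destruct (sum_chi_term_cv k p Hk Hp) as [chi Hchi].
  pose proof (E_C_Jgt_cv k p Hk Hp chi Hchi) as HG.
  exists chi. split; [exact Hchi |]. split; [split |].
  - apply Rle_cv_lim with (fun N => 1 - P_J_gt k p N) (sum_f_R0 (chi_term k p)); auto.
    + intros N. apply sum_chi_term_bounds; auto.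
    + apply one_minus_P_J_gt_cv; auto.
  - apply Rle_cv_lim with (sum_f_R0 (chi_term k p)) (fun _ => 2); auto using Un_cv_const.
    intros N. apply sum_chi_term_bounds; auto.
  - split.
    + intros ->. replace 0 with (2 - 2) by ring. exact HG.
    + intros H0. pose proof (UL_sequence _ _ _ HG H0). lra.
Qed.
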